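(* For a function $f:\mathbb{R}\to\mathbb{R}$, $V>0$ and $p\in(0,\infty)$ define $$\|f\|_{p,V}:=\sup\Big\{\Big(\frac{1}{|\Omega|}\int_{\Omega}|f(x)|^{p}\,dx\Big)^{1/p} : \Omega\subset\mathbb{R} \text{ open and convex},\ |\Omega|=V\Big\},$$ and let $L^p_V:=\{f\mid \|f\|_{p,V}<\infty\}$ modulo functions vanishing almost everywhere. Let $p\in[1,\infty)$ and $T,S>0$ with $T<S$ such that $S/T\notin\mathbb{N}$. Then there exist $f,g\in L^p_T$ such that $$\|f\|_{p,T}<\|f\|_{p,S}\quad\text{and}\quad\|g\|_{p,S}<\|g\|_{p,T}.$$
   Context: $|\Omega|$ denotes Lebesgue measure; open convex subsets of $\mathbb{R}$ are open intervals; functions are measurable. *)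

From HB Require Import structures.
From mathcomp Require Import all_boot all_order all_algebra.
From mathcomp Require Import all_classical all_reals all_analysis.
Set Implicit Arguments. Unset Strict Implicit. Unset Printing Implicit Defensive.
Import Order.TTheory GRing.Theory Num.Theory.
Import numFieldNormedType.Exports.
Local Open Scope classical_set_scope.
Local Open Scope ring_scope.

Definition convex_setR (R : realType) (A : set R) : Prop :=
  forall x y z : R, A x -> A y -> x <= z -> z <= y -> A z.

Definition normpV (R : realType) (p V : R) (f : R -> R) : \bar R :=
  ereal_sup [set ((fine (lebesgue_measure O))^-1%:E *
                  \int[lebesgue_measure]_(x in O) (`|f x| `^ p)%:E) `^ p^-1
            | O in [set O : set R | @open (R : realType) O /\ convex_setR O /\
                                    lebesgue_measure O = V%:E]]%E.

(* Both examples are indicators: the mean of |1_E|^p over a window O is |E `&` O| / |O|.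
   For g = 1_[0,T], a window of any length carries at most T of E, so
   ||g||_{p,S} <= (T/S)^(1/p) < 1 = ||g||_{p,T}.  For f, write kT < S < (k+1)T (this is
   where S/T is not an integer) and let E be a comb of k+1 teeth of width e separated by
   gaps longer than T: a window of length T meets at most one tooth, so
   ||f||_{p,T} <= (e/T)^(1/p), while for small e the window ]0,S[ contains every tooth, so
   ||f||_{p,S} >= ((k+1)e/S)^(1/p), which is larger because (k+1)T > S. *)

From HB Require Import structures.
From mathcomp Require Import all_boot all_order all_algebra.
From mathcomp Require Import all_classical all_reals all_analysis.
From mathcomp Require Import measurable_realfun ring lra.
Set Implicit Arguments. Unset Strict Implicit. Unset Printing Implicit Defensive.
Import Order.TTheory GRing.Theory Num.Theory.
Import numFieldNormedType.Exports.
Local Open Scope classical_set_scope.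
Local Open Scope ring_scope.

Section indicator_normpV.
Variable R : realType.
Local Notation mu := (@lebesgue_measure R).
Implicit Types (p V : R) (E O : set R).

Definition admissible (V : R) (O : set R) := open O /\ convex_setR O /\ mu O = V%:E.

Lemma admissible_itv_oo (a b : R) : a < b -> admissible (b - a) `]a, b[.
Proof.
move=> ab; split; first exact: interval_open.
split; last by rewrite lebesgue_measure_itv /= lte_fin ab -EFinD.
move=> x y z /=; rewrite !in_itv /= => /andP[ax _] /andP[_ yb] xz zy.
by rewrite (lt_le_trans ax xz) (le_lt_trans zy yb).
Qed.

Lemma convex_subr_le_measure V (O : set R) x y : convex_setR O -> measurable O ->
  mu O = V%:E -> O x -> O y -> x <= y -> y - x <= V.
Proof.
move=> cO mO muO Ox Oy xy.
have sub_xy : `[x, y] `<=` O.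
  by move=> z /=; rewrite in_itv /= => /andP[xz zy]; exact: (cO x y).
have : (mu `[x, y] <= mu O)%E.
  by apply: le_measure; rewrite ?inE //; exact: measurable_itv.
rewrite muO lebesgue_measure_itv /= lte_fin.
have [_|yx _] := ltP x y; first by rewrite -EFinD lee_fin.
by rewrite [x](@le_anti _ _ x y) ?xy // subrr -lee_fin -muO measure_ge0.
Qed.

Lemma mean_pow_indic p V (E O : set R) : 0 < p -> measurable E -> admissible V O ->
  ((fine (mu O))^-1%:E * \int[mu]_(x in O) (`|(\1_E : R -> R) x| `^ p)%:E)%E
  = (V^-1%:E * mu (E `&` O))%E.
Proof.
move=> p0 mE [oO [_ muO]]; rewrite muO /=; congr (_ * _)%E.
rewrite -integral_indic //; last exact: open_measurable.
apply: eq_integral => x _; rewrite indicE; case: (x \in E) => /=.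
  by rewrite normr1 powR1.
by rewrite normr0 powR0 // gt_eqF.
Qed.

Lemma normpV_indic_le p V c (E : set R) : 0 < p -> measurable E -> 0 < V -> 0 <= c ->
  (forall O, admissible V O -> (mu (E `&` O) <= c%:E)%E) ->
  (normpV p V (\1_E) <= ((c / V)%:E) `^ p^-1)%E.
Proof.
move=> p0 mE V0 c0 muEO; apply: ge_ereal_sup => _ [U aU <-].
have V'0 : 0 <= V^-1 by rewrite invr_ge0 ltW.
rewrite (mean_pow_indic p0 mE aU) mulrC EFinM; apply: gt0_ler_poweR.
- by rewrite invr_ge0 ltW.
- by rewrite in_itv /= leey andbT mule_ge0 ?measure_ge0.
- by rewrite in_itv /= leey andbT lee_fin mulr_ge0.
- by apply: lee_wpmul2l; [rewrite lee_fin | exact: muEO].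
Qed.

Lemma normpV_indic_ge p V c (E O : set R) : 0 < p -> measurable E -> admissible V O ->
  mu (E `&` O) = c%:E -> (((c / V)%:E) `^ p^-1 <= normpV p V (\1_E))%E.
Proof.
move=> p0 mE aO muEO; apply: ereal_sup_ubound; exists O => //.
by rewrite (mean_pow_indic p0 mE aO) muEO mulrC EFinM.
Qed.

Lemma normpV_indic_le1 p V (E : set R) : 0 < p -> measurable E -> 0 < V ->
  (normpV p V (\1_E) <= 1)%E.
Proof.
move=> p0 mE V0; rewrite -(poweR1r p^-1) -(divff (lt0r_neq0 V0)).
apply: normpV_indic_le => //; first exact: ltW.
move=> O [/open_measurable mO [_ <-]].
by apply: le_measure; rewrite ?inE //; exact: measurableI.
Qed.

Lemma normpV_indic_lt p V W a b (E O : set R) : 0 < p -> measurable E ->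
  0 < V -> 0 <= a -> (forall O, admissible V O -> (mu (E `&` O) <= a%:E)%E) ->
  admissible W O -> mu (E `&` O) = b%:E -> a / V < b / W ->
  (normpV p V (\1_E) < normpV p W (\1_E))%E.
Proof.
move=> p0 mE V0 a0 muEO aO muEOb ab.
apply: le_lt_trans (normpV_indic_le p0 mE V0 a0 muEO) _.
apply: lt_le_trans (normpV_indic_ge p0 mE aO muEOb).
rewrite !poweR_EFin lte_fin; apply: gt0_ltr_powR; rewrite ?invr_gt0 //.
  by rewrite nnegrE divr_ge0 // ltW.
by rewrite nnegrE (le_trans _ (ltW ab)) // divr_ge0 // ltW.
Qed.

End indicator_normpV.

Section comb.
Variables (R : realType) (d e : R) (k : nat).
Hypotheses (e_gt0 : 0 < e) (e_lt_d : e < d).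
Local Notation mu := (@lebesgue_measure R).
Implicit Types (V b x y : R) (O : set R).

Definition tooth (i : nat) : set R := `[i%:R * d + e, i%:R * d + 2 * e].

Definition comb : set R := \bigcup_(i < k.+1) tooth i.

Lemma measurable_comb : measurable comb.
Proof. by apply: bigcup_measurable => i _; exact: measurable_itv. Qed.

Lemma measure_tooth i : mu (tooth i) = e%:E.
Proof.
rewrite lebesgue_measure_itv /= lte_fin ltrD2l ltr_pMl // ?ltr1n //.
by rewrite -EFinD; congr (_%:E); lra.
Qed.

Lemma tooth_gap i j x y : (i < j)%N -> tooth i x -> tooth j y -> d - e <= y - x.
Proof.
move=> ij; rewrite /tooth /= !in_itv /= => /andP[_ x2] /andP[y1 _].
have ij' : i%:R + 1 <= j%:R :> R by rewrite natr1 ler_nat.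
have d_gt0 : 0 < d by exact: lt_trans e_gt0 e_lt_d.
have : (i%:R + 1) * d <= j%:R * d by rewrite ler_pM2r.
lra.
Qed.

Lemma tooth_disjoint i j : i != j -> tooth i `&` tooth j = set0.
Proof.
move=> ij; apply/seteqP; split => // x [xi xj]; have lt_ed := e_lt_d.
case: ltngtP ij => // [lt_ij|lt_ji] _.
  by have := tooth_gap lt_ij xi xj; rewrite subrr; lra.
by have := tooth_gap lt_ji xj xi; rewrite subrr; lra.
Qed.

Lemma measure_comb : mu comb = (k.+1%:R * e)%:E.
Proof.
rewrite /comb bigcup_mkord measure_bigsetU //; first last.
- move=> i j _ _; have [//|ij] := eqVneq i j.
  by rewrite tooth_disjoint // => -[].
- by move=> i; exact: measurable_itv.
rewrite (eq_bigr (fun=> e%:E)); last by move=> i _; exact: measure_tooth.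
by rewrite sumEFin sumr_const card_ord mulr_natl.
Qed.

Lemma comb_subset_itv b : k%:R * d + 2 * e < b -> comb `<=` `]0, b[.
Proof.
move=> kde_b x [i /= ik]; rewrite /tooth /= !in_itv /= => /andP[x1 x2].
have d_gt0 : 0 < d by exact: lt_trans e_gt0 e_lt_d.
have id_ge0 : 0 <= i%:R * d by rewrite mulr_ge0 // ltW.
have le_ikd : i%:R * d <= k%:R * d by rewrite ler_pM2r // ler_nat -ltnS.
apply/andP; split; last lra.
exact: lt_le_trans (ltr_wpDl id_ge0 e_gt0) x1.
Qed.

Lemma measure_comb_convex_le V O : V < d - e -> convex_setR O -> measurable O ->
  mu O = V%:E -> (mu (comb `&` O) <= e%:E)%E.
Proof.
move=> Vde cO mO muO.
have far_apart u v : O u -> O v -> d - e <= v - u -> False.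
  move=> Ou Ov duv; have lt_ed := e_lt_d.
  have uv : u <= v by lra.
  by have := convex_subr_le_measure cO mO muO Ou Ov uv; lra.
have [[x [[i _ xi] Ox]]|/nonemptyPn ->] := pselect (comb `&` O !=set0); last first.
  by rewrite measure0 lee_fin ltW.
rewrite -(measure_tooth i); apply: le_measure; rewrite ?inE.
- exact: measurableI measurable_comb mO.
- exact: measurable_itv.
move=> y [[j _ yj] Oy]; have [lt_ij|lt_ji|-> //] := ltngtP i j.
  by case: (far_apart x y Ox Oy (tooth_gap lt_ij xi yj)).
by case: (far_apart y x Oy Ox (tooth_gap lt_ji yj xi)).
Qed.
End comb.

Lemma normpV_indic_itv_lt (R : realType) (p T S : R) : 0 < p -> 0 < T -> T < S ->
  (normpV p S (\1_`[0%R, T]) < normpV p T (\1_`[0%R, T]))%E.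
Proof.
move=> p0 T0 TS; have S0 := lt_trans T0 TS.
have mT : measurable (`[0, T] : set R) by exact: measurable_itv.
have muT : lebesgue_measure (`[0, T] : set R) = T%:E.
  by rewrite lebesgue_measure_itv /= lte_fin T0 -EFinD subr0.
have /= aT := admissible_itv_oo T0; rewrite subr0 in aT.
apply: (normpV_indic_lt (b := T) p0 mT S0 (ltW T0) _ aT).
- move=> O [/open_measurable mO _]; rewrite -muT.
  apply: le_measure; rewrite ?inE //; exact: measurableI.
- rewrite setIidr; first by case: aT => _ [].
  by apply: subset_itvW.
- by rewrite divff ?gt_eqF // ltr_pdivrMr // mul1r.
Qed.

Lemma exists_normpV_indic_lt (R : realType) (p T S : R) (k : nat) :
  0 < p -> 0 < T -> k%:R * T < S -> S < k.+1%:R * T ->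
  exists E : set R, measurable E /\ (normpV p T (\1_E) < normpV p S (\1_E))%E.
Proof.
move=> p0 T0 kTS SkT.
have S0 : 0 < S by apply: le_lt_trans kTS; rewrite mulr_ge0 // ltW.
have k2_gt0 : 0 < 2 * (k%:R + 2) :> R by rewrite mulr_gt0 // ltr_wpDl.
(* Chosen so that the k+1 teeth, of period d = T + 2e, fit into ]0, S[. *)
set e := (S - k%:R * T) / (2 * (k%:R + 2)).
have e_gt0 : 0 < e by rewrite divr_gt0 // subr_gt0.
have e_def : 2 * (k%:R * e) + 4 * e = S - k%:R * T.
  by rewrite /e; field; rewrite gt_eqF.
set d := T + 2 * e.
have e_lt_d : e < d by rewrite /d; lra.
have mE := measurable_comb d e k.
exists (comb d e k); split => //.
have /= aS := admissible_itv_oo S0; rewrite subr0 in aS.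
apply: (normpV_indic_lt (b := k.+1%:R * e) p0 mE T0 (ltW e_gt0) _ aS).
- move=> O [/open_measurable mO [cO muO]].
  by apply: (measure_comb_convex_le k e_gt0 e_lt_d _ cO mO muO); rewrite /d; lra.
- rewrite setIidl; first exact: measure_comb.
  by apply: (comb_subset_itv e_gt0 e_lt_d); rewrite /d mulrDr mulrCA; lra.
- rewrite -subr_gt0 (_ : _ - _ = e * (k.+1%:R * T - S) / (T * S)); last first.
    by field; rewrite !gt_eqF.
  by rewrite divr_gt0 ?mulr_gt0 // subr_gt0.
Qed.

Lemma non_nat_ratio_between_multiples (R : realType) (T S : R) : 0 < T -> 0 <= S ->
  ~ (exists n : nat, S / T = n%:R) -> exists k : nat, k%:R * T < S /\ S < k.+1%:R * T.
Proof.
move=> T0 S0 non_nat; have /andP[le_kST lt_STk] := truncn_itv (divr_ge0 S0 (ltW T0)).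
exists (Num.truncn (S / T)); split; last by rewrite -ltr_pdivrMr.
rewrite -ltr_pdivlMr // lt_neqAle le_kST andbT.
by apply/eqP => ST; apply: non_nat; exists (Num.truncn (S / T)).
Qed.

Theorem lemma2p4 (R : realType) (p T S : R) :
  1 <= p -> 0 < T -> T < S -> ~ (exists n : nat, S / T = n%:R) ->
  exists f g : R -> R,
    measurable_fun setT f /\ measurable_fun setT g /\
    (normpV p T f < +oo)%E /\ (normpV p T g < +oo)%E /\
    (normpV p T f < normpV p S f)%E /\ (normpV p S g < normpV p T g)%E.
Proof.
move=> p1 T0 TS non_nat; have p0 := lt_le_trans ltr01 p1.
have [k [kTS SkT]] := non_nat_ratio_between_multiples T0 (ltW (lt_trans T0 TS)) non_nat.
have [E [mE ltE]] := exists_normpV_indic_lt p0 T0 kTS SkT.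
have normpV_fin F : measurable F -> (normpV p T (\1_F) < +oo)%E.
  by move=> mF; exact: le_lt_trans (normpV_indic_le1 p0 mF T0) (ltry 1).
exists (\1_E), (\1_`[0, T]); split; first exact: measurable_indic.
split; first exact: measurable_indic.
by do !split; [exact: normpV_fin | exact: normpV_fin | exact: ltE |
  exact: normpV_indic_itv_lt].
Qed.
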